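(* Let $n_1<n_2<n_3<\cdots$ be the colossally abundant numbers listed in increasing order. Then $$\lim_{i\to\infty}\frac{\log n_{i-1}}{\log n_i}=1.$$
   Context: $\sigma(n)=\sum_{d\mid n}d$. A positive integer $n$ is colossally abundant if there exists $\varepsilon>0$ such that $\sigma(k)/k^{1+\varepsilon}\le \sigma(n)/n^{1+\varepsilon}$ for all $k\in\mathbb N$. There are infinitely many colossally abundant numbers; the first few are $2,6,12,60,120,360,2520,5040,\dots$. *)

From Stdlib Require Import Reals Arith List.
Open Scope R_scope.

(* sigma n = sum of the positive divisors of n (sigma 0 = 0, never used). *)
Definition sigma (n : nat) : nat :=
  fold_right Nat.add 0%nat
    (filter (fun d => Nat.eqb (Nat.modulo n d) 0) (seq 1 n)).

Definition colossally_abundant (n : nat) : Prop :=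
  (1 <= n)%nat /\
  exists eps : R, 0 < eps /\
    forall k : nat, (1 <= k)%nat ->
      INR (sigma k) / Rpower (INR k) (1 + eps)
      <= INR (sigma n) / Rpower (INR n) (1 + eps).

(* Write abundance e k = sigma(k) / k^(1+e); N is colossally abundant iff it
   maximises abundance e for some e > 0.  The proof has an arithmetic and a
   growth part.

   Arithmetic part.  sigma is multiplicative and j |-> sigma(p^j) is strictly
   log-concave, so j |-> abundance e (p^j) is unimodal and a number whose
   prime exponents are all local maxima is a global maximiser.  For a
   maximiser N at e, let p0 be the least prime not dividing N, and q the
   prime of {p0} u primes(N) whose exponent has the largest threshold e' (the
   parameter at which raising that exponent by one becomes neutral).  Then
   N q maximises abundance e' with e' > 0 and q <= p0; hence the colossally
   abundant number after N is at most N p0, where all primes below p0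
   divide N.

   Growth part.  If all primes below p0 divide N, then N is at least the
   primorial of p0, which is at least pi(p0)!; with Erdos' bound
   p0 <= 4^(pi(p0)+1) this gives p0^K <= N for every fixed K once N is large.
   So n_(i+1)^K <= n_i^(K+1) eventually, and the ratio of logarithms lies in
   [K/(K+1), 1]. *)

From Stdlib Require Import Reals Lra Lia.
From mathcomp Require Import ssreflect ssrfun ssrbool.
From mathcomp Require all_boot zify.

Set Implicit Arguments.
Unset Strict Implicit.

Module CAGrowth.
Import eqtype ssrnat seq path div choice fintype tuple finfun bigop prime zify.
Open Scope nat_scope.

Section DivisorSum.

Lemma modulo_modn n d : 0 < d -> Nat.modulo n d = n %% d.
Proof.
move=> d_gt0; symmetry; apply: Nat.mod_unique; first by apply/ltP; rewrite ltn_pmod.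
by rewrite {1}(divn_eq n d) mulnC plusE multE.
Qed.

Lemma sigma_iota n : sigma n = \sum_(d <- iota 1 n | d %| n) d.
Proof.
have seq_iota a m : List.seq a m = iota a m.
  by elim: m a => [|m IH] a //=; rewrite IH.
have filterE (p : pred nat) s : List.filter p s = seq.filter p s.
  by elim: s => //= x s ->.
rewrite /sigma seq_iota filterE -big_filter.
have -> : seq.filter (fun d => Nat.eqb (Nat.modulo n d) 0) (iota 1 n)
          = [seq d <- iota 1 n | d %| n].
  apply: eq_in_filter => d; rewrite mem_iota => /andP[d_gt0 _].
  by rewrite modulo_modn.
by elim: (seq.filter _ _) => [|x s /= ->]; rewrite ?big_nil ?big_cons.
Qed.

Lemma sigma_divisors n : 0 < n -> sigma n = \sum_(d <- divisors n) d.
Proof.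
move=> n_gt0; rewrite sigma_iota -big_filter; congr bigop.
apply: (irr_sorted_eq (leT := ltn)) => [||||d].
- exact: ltn_trans.
- exact: ltnn.
- by apply: sorted_filter; [exact: ltn_trans | exact: iota_ltn_sorted].
- exact: sorted_divisors_ltn.
rewrite mem_filter mem_iota -dvdn_divisors //.
case dn: (d %| n); rewrite ?andbF ?andbT //=.
by rewrite add1n ltnS (dvdn_gt0 n_gt0 dn) /= dvdn_leq.
Qed.

Lemma divisors_coprime_mul a b : coprime a b -> 0 < a -> 0 < b ->
  perm_eq (divisors (a * b)) [seq x * y | x <- divisors a, y <- divisors b].
Proof.
move=> co a_gt0 b_gt0; apply: uniq_perm.
- exact: divisors_uniq.
- apply: allpairs_uniq; try exact: divisors_uniq.
  move=> [x y] [x' y'] /allpairsP[[x1 y1] /= [hx hy [-> ->]]].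
  move=> /allpairsP[[x2 y2] /= [hx' hy' [-> ->]]] /= E.
  rewrite -!dvdn_divisors // in hx hy hx' hy'.
  have cy : coprime a y1 by apply: (coprime_dvdr hy).
  have cy' : coprime a y2 by apply: (coprime_dvdr hy').
  have ex : x1 = x2.
    have := Gauss_gcdl x1 cy; rewrite E (Gauss_gcdl x2 cy').
    by rewrite (gcdn_idPr hx) (gcdn_idPr hx').
  subst x2; congr pair; apply/eqP; rewrite -(eqn_pmul2l (m := x1)) ?E //.
  exact: dvdn_gt0 a_gt0 hx.
move=> d; rewrite -dvdn_divisors ?muln_gt0 ?a_gt0 //; apply/idP/allpairsP.
- move=> dab.
  have d_gt0 : 0 < d by apply: (dvdn_gt0 _ dab); rewrite muln_gt0 a_gt0.
  set y := gcdn d b.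
  have y_gt0 : 0 < y by rewrite gcdn_gt0 d_gt0.
  set z := d %/ y; set w := b %/ y.
  have dE : d = z * y by rewrite divnK // dvdn_gcdl.
  have bE : b = w * y by rewrite divnK // dvdn_gcdr.
  have czw : coprime z w.
    rewrite /coprime; apply/eqP/eqP; rewrite -(eqn_pmul2r y_gt0) mul1n.
    by rewrite muln_gcdl -dE -bE.
  have za : z %| a.
    by rewrite -(Gauss_dvdl _ czw) -(dvdn_pmul2r y_gt0) -dE -mulnA -bE.
  by exists (z, y); split; rewrite /= -?dvdn_divisors // dvdn_gcdr.
- case=> [[x y] /= [hx hy ->]]; rewrite -!dvdn_divisors // in hx hy.
  exact: dvdn_mul.
Qed.

Lemma sigma_mul a b : coprime a b -> 0 < a -> 0 < b ->
  sigma (a * b) = sigma a * sigma b.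
Proof.
move=> co a_gt0 b_gt0; rewrite !sigma_divisors ?muln_gt0 ?a_gt0 //.
rewrite (perm_big _ (divisors_coprime_mul co a_gt0 b_gt0)) /=.
rewrite big_allpairs_dep /= big_distrl /=; apply: eq_bigr => x _.
by rewrite big_distrr.
Qed.

Lemma sigma_gt0 k : 0 < k -> 0 < sigma k.
Proof. by move=> k_gt0; rewrite sigma_divisors // (big_rem 1) ?divisor1. Qed.

Lemma sigma_prime_pow p j : prime p -> sigma (p ^ j) = \sum_(i < j.+1) p ^ i.
Proof.
move=> p_pr; have p_gt0 := prime_gt0 p_pr.
rewrite sigma_divisors ?expn_gt0 ?p_gt0 //.
have perm_pow : perm_eq (divisors (p ^ j)) [seq p ^ i | i <- iota 0 j.+1].
  apply: uniq_perm; first exact: divisors_uniq.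
    by rewrite map_inj_uniq ?iota_uniq //; apply: expnI; rewrite prime_gt1.
  move=> d; rewrite -dvdn_divisors ?expn_gt0 ?p_gt0 //; apply/idP/mapP.
    by case/(dvdn_pfactor _ _ p_pr) => m mj ->; exists m; rewrite // mem_iota ltnS.
  case=> m; rewrite mem_iota ltnS => /andP[_ mj] ->.
  by apply/(dvdn_pfactor _ _ p_pr); exists m.
by rewrite (perm_big _ perm_pow) big_map -(big_mkord xpredT (fun i => p ^ i)).
Qed.

Lemma sigma_prime_powS p j : prime p -> sigma (p ^ j.+1) = 1 + p * sigma (p ^ j).
Proof.
move=> p_pr; rewrite !sigma_prime_pow // big_ord_recl expn0 big_distrr /=.
by congr addn; apply: eq_bigr => i _; rewrite expnS.
Qed.

End DivisorSum.

Section Unimodal.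
Local Open Scope R_scope.

Variables (u A : nat -> R) (c : R).
Hypothesis c_pos : 0 < c.
Hypothesis A_pos : forall j, 0 < A j.
Hypothesis u_pos : forall j, 0 < u j.
Hypothesis u_ratio : forall j, u j.+1 * c * A j = u j * A j.+1.
Hypothesis A_log_concave : forall j, A j.+2 * A j < A j.+1 * A j.+1.

Lemma unimodal_descent j : A j.+1 <= c * A j -> u j.+1 <= u j.
Proof.
move=> hj; apply: (Rmult_le_reg_r (c * A j)); first exact: Rmult_lt_0_compat.
by rewrite -[u j.+1 * _]Rmult_assoc u_ratio; apply/Rmult_le_compat_l/hj/Rlt_le.
Qed.

Lemma unimodal_ascent j : c * A j <= A j.+1 -> u j <= u j.+1.
Proof.
move=> hj; apply: (Rmult_le_reg_r (c * A j)); first exact: Rmult_lt_0_compat.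
by rewrite -[u j.+1 * _]Rmult_assoc u_ratio; apply/Rmult_le_compat_l/hj/Rlt_le.
Qed.

Lemma ratio_drop j : A j.+1 <= c * A j -> A j.+2 < c * A j.+1.
Proof. by move=> hj; have := A_log_concave j; have := A_pos j; have := A_pos j.+1; nra. Qed.

Lemma ratio_stays_below j : A j.+1 <= c * A j ->
  forall k, A (j + k).+1 <= c * A (j + k).
Proof.
move=> hj; elim=> [|k IH]; first by rewrite addn0.
by rewrite addnS; apply: Rlt_le; apply: ratio_drop.
Qed.

Lemma ratio_stays_strictly_below j : A j.+1 < c * A j ->
  forall k, A (j + k).+1 < c * A (j + k).
Proof.
move=> hj; elim=> [|k IH]; first by rewrite addn0.
by rewrite addnS; apply: ratio_drop; apply: Rlt_le.
Qed.

Lemma unimodal_max b : A b.+1 <= c * A b ->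
  (b = 0%N \/ c * A b.-1 <= A b) -> forall j, u j <= u b.
Proof.
move=> fall rise j; case: (leqP b j) => [le_bj|lt_jb].
- rewrite -(subnKC le_bj); elim: (j - b)%N => [|k IH]; first by rewrite addn0; lra.
  apply: Rle_trans IH; rewrite addnS; apply: unimodal_descent.
  exact: ratio_stays_below.
- have rising i : (i < b)%N -> c * A i <= A i.+1.
    move=> lt_ib; apply: Rnot_lt_le => fall_i.
    case: rise => [b0|rise]; first by rewrite b0 in lt_ib.
    have b_gt0 : (0 < b)%N by apply: leq_ltn_trans lt_ib.
    have := ratio_stays_strictly_below fall_i (b.-1 - i).
    rewrite subnKC ?prednK //; [lra | by rewrite -ltnS prednK].
  have up k : (j + k <= b)%N -> u j <= u (j + k).
    elim: k => [|k IH] hk; first by rewrite addn0; lra.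
    rewrite addnS in hk *; apply: Rle_trans (IH (ltnW hk)) _.
    exact: unimodal_ascent (rising _ hk).
  by have := up (b - j)%N; rewrite subnKC ?(ltnW lt_jb) //; apply.
Qed.

End Unimodal.

Section PrimeFactorisation.

Lemma primes_nil k : 0 < k -> primes k = [::] -> k = 1.
Proof.
move=> k_gt0 h; case: (ltnP 1 k) => k1; last by apply/eqP; rewrite eqn_leq k1 k_gt0.
have : pdiv k \in primes k by rewrite mem_primes pdiv_prime // k_gt0 pdiv_dvd.
by rewrite h.
Qed.

Lemma split_prime_part p k : prime p -> 0 < k ->
  exists k', [/\ 0 < k', coprime p k', k = k' * p ^ logn p k &
     forall q, prime q -> q != p -> logn q k = logn q k'].
Proof.
move=> p_pr k_gt0; case: (pfactor_coprime p_pr k_gt0) => k' co E.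
have k'_gt0 : 0 < k' by move: k_gt0; rewrite E muln_gt0 => /andP[].
exists k'; split => // q q_pr q_neq.
rewrite {1}E (lognM _ k'_gt0) ?expn_gt0 ?prime_gt0 // lognX (logn_prime q p_pr).
by rewrite (negbTE q_neq) muln0 addn0.
Qed.

Lemma primes_cofactor p k k' : prime p -> coprime p k' -> 0 < k ->
  k = k' * p ^ logn p k -> {subset primes k' <= [predD1 primes k & p]}.
Proof.
move=> p_pr co k_gt0 E q; rewrite !inE !mem_primes => /and3P[q_pr _ qk].
have qk' : q %| k by rewrite E dvdn_mulr.
rewrite q_pr k_gt0 qk' !andbT; apply/eqP => eqp; subst q.
by move: co; rewrite /coprime (gcdn_idPl qk) => /eqP h; move: (prime_gt1 q_pr); rewrite h.
Qed.

End PrimeFactorisation.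

Section Abundance.
Local Open Scope R_scope.

Definition abundance (e : R) (k : nat) : R := INR (sigma k) / Rpower (INR k) (1 + e).

Lemma colossally_abundantE m : colossally_abundant m <->
  (0 < m)%N /\ exists e, 0 < e /\ forall k, (0 < k)%N -> abundance e k <= abundance e m.
Proof.
split=> [[/leP m_gt0 [e [e_gt0 hmax]]]|[m_gt0 [e [e_gt0 hmax]]]].
- by split=> //; exists e; split=> // k /leP; apply: hmax.
- by split; [apply/leP | exists e; split=> // k /leP; apply: hmax].
Qed.

Lemma INR_pos k : (0 < k)%N -> 0 < INR k.
Proof. by move=> /ltP; apply: lt_0_INR. Qed.

Lemma Rpower_pos x y : 0 < Rpower x y.
Proof. exact: exp_pos. Qed.

Lemma abundance_pos e k : (0 < k)%N -> 0 < abundance e k.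
Proof.
move=> k_gt0; apply: Rdiv_lt_0_compat; last exact: Rpower_pos.
exact/INR_pos/sigma_gt0.
Qed.

Lemma abundance_mul e a b : coprime a b -> (0 < a)%N -> (0 < b)%N ->
  abundance e (a * b) = abundance e a * abundance e b.
Proof.
move=> co a_gt0 b_gt0; rewrite /abundance sigma_mul // -!multE !mult_INR.
rewrite -Rpower_mult_distr; try exact: INR_pos.
have := Rpower_pos (INR a) (1 + e); have := Rpower_pos (INR b) (1 + e).
by move=> *; field; lra.
Qed.

Definition sigma_pow (p j : nat) : R := INR (sigma (p ^ j)).
Definition weight (p : nat) (e : R) : R := Rpower (INR p) (1 + e).

Lemma sigma_pow_pos p j : prime p -> 0 < sigma_pow p j.
Proof. by move=> p_pr; apply/INR_pos/sigma_gt0; rewrite expn_gt0 prime_gt0. Qed.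

Lemma sigma_pow_ge1 p j : prime p -> 1 <= sigma_pow p j.
Proof.
move=> p_pr; have /leP : (0 < sigma (p ^ j))%N.
  by apply: sigma_gt0; rewrite expn_gt0 prime_gt0.
by move=> /le_INR.
Qed.

Lemma sigma_pow0 p : sigma_pow p 0 = 1.
Proof. by rewrite /sigma_pow expn0. Qed.

Lemma sigma_powS p j : prime p -> sigma_pow p j.+1 = 1 + INR p * sigma_pow p j.
Proof. by move=> p_pr; rewrite /sigma_pow sigma_prime_powS // -multE -plusE plus_INR mult_INR. Qed.

(* Strict log-concavity of j |-> sigma(p^j), the arithmetic input behind the
   unimodality of the abundance along the powers of a prime. *)
Lemma sigma_pow_log_concave p j : prime p ->
  sigma_pow p j.+2 * sigma_pow p j < sigma_pow p j.+1 * sigma_pow p j.+1.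
Proof.
move=> p_pr; rewrite /sigma_pow !sigma_prime_powS //.
have s_gt0 : (0 < sigma (p ^ j))%N by apply: sigma_gt0; rewrite expn_gt0 prime_gt0.
have p_gt1 := prime_gt1 p_pr.
set X := sigma (p ^ j) in s_gt0 *.
rewrite -!multE -!plusE -!mult_INR; apply: lt_INR.
by move/ltP: s_gt0; move/ltP: p_gt1; nia.
Qed.

Lemma weight_pos p e : 0 < weight p e.
Proof. exact: Rpower_pos. Qed.

Lemma INR_prime_gt1 p : prime p -> 1 < INR p.
Proof. by move=> p_pr; apply: lt_1_INR; apply/ltP; apply: prime_gt1. Qed.

Lemma abundance_prime_powS e p j : prime p ->
  abundance e (p ^ j.+1) * weight p e * sigma_pow p j
  = abundance e (p ^ j) * sigma_pow p j.+1.
Proof.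
move=> p_pr; have p_gt0 := prime_gt0 p_pr.
rewrite /abundance /weight /sigma_pow expnSr -multE mult_INR.
rewrite -Rpower_mult_distr; try apply: INR_pos; rewrite ?expn_gt0 ?p_gt0 //.
have := Rpower_pos (INR (p ^ j)) (1 + e); have := Rpower_pos (INR p) (1 + e).
by move=> *; field; lra.
Qed.

Lemma abundance_prime_pow_max e p b : prime p ->
  sigma_pow p b.+1 <= weight p e * sigma_pow p b ->
  (b = 0%N \/ weight p e * sigma_pow p b.-1 <= sigma_pow p b) ->
  forall j, abundance e (p ^ j) <= abundance e (p ^ b).
Proof.
move=> p_pr.
apply: (@unimodal_max (fun j => abundance e (p ^ j)) (sigma_pow p) (weight p e)).
- exact: weight_pos.
- by move=> j; apply: sigma_pow_pos.
- by move=> j; apply: abundance_pos; rewrite expn_gt0 prime_gt0.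
- by move=> j; apply: abundance_prime_powS.
- by move=> j; apply: sigma_pow_log_concave.
Qed.

(* The proof is an induction over a list of primes containing
   all prime factors involved, using multiplicativity. *)
Lemma abundance_max_of_prime_list e (P : seq nat) : uniq P -> all prime P ->
  forall k M, (0 < k)%N -> (0 < M)%N -> {subset primes k <= P} -> {subset primes M <= P} ->
  (forall p, p \in P -> forall j, abundance e (p ^ j) <= abundance e (p ^ logn p M)) ->
  abundance e k <= abundance e M.
Proof.
have no_primes m : (0 < m)%N -> {subset primes m <= [::]} -> m = 1%N.
  move=> m_gt0 hm; apply: primes_nil => //.
  by case: (primes m) hm => // x s /(_ x); rewrite inE eqxx => /(_ isT).
elim: P => [|p P IH] /=.
  move=> _ _ k M k_gt0 M_gt0 hk hM _.
  rewrite (no_primes k k_gt0 hk) (no_primes M M_gt0 hM); exact: Rle_refl.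
move=> /andP[pP uP] /andP[p_pr aP] k M k_gt0 M_gt0 hk hM hloc.
case: (split_prime_part p_pr k_gt0) => k' [k'_gt0 cok Ek _].
case: (split_prime_part p_pr M_gt0) => M' [M'_gt0 coM EM lM].
have in_P m m' : {subset primes m <= p :: P} ->
    {subset primes m' <= [predD1 primes m & p]} -> {subset primes m' <= P}.
  move=> hm hm' q /hm' /andP[/= q_neq /hm]; by rewrite inE (negbTE q_neq).
have IH' : abundance e k' <= abundance e M'.
  apply: (IH uP aP) => //.
  - exact: in_P hk (primes_cofactor p_pr cok k_gt0 Ek).
  - exact: in_P hM (primes_cofactor p_pr coM M_gt0 EM).
  move=> q qP j.
  have q_neq : q != p by apply: contraNneq pP => <-.
  by rewrite -lM ?(allP aP) //; apply: hloc; rewrite inE qP orbT.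
rewrite {1}Ek {1}EM !abundance_mul ?expn_gt0 ?(prime_gt0 p_pr) //;
  try by apply: coprimeXr; rewrite coprime_sym.
apply: Rmult_le_compat => //; try (apply: Rlt_le; apply: abundance_pos; by []).
by apply: hloc; rewrite inE eqxx.
Qed.

Lemma abundance_max_of_local_max e M : (0 < M)%N ->
  (forall p, prime p -> forall j, abundance e (p ^ j) <= abundance e (p ^ logn p M)) ->
  forall k, (0 < k)%N -> abundance e k <= abundance e M.
Proof.
move=> M_gt0 hloc k k_gt0.
apply: (abundance_max_of_prime_list (P := undup (primes k ++ primes M))) => //.
- exact: undup_uniq.
- by apply/allP => q; rewrite mem_undup mem_cat !mem_primes => /orP[/andP[]|/andP[]].
- by move=> q qk; rewrite mem_undup mem_cat qk.
- by move=> q qM; rewrite mem_undup mem_cat qM orbT.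
- move=> p; rewrite mem_undup mem_cat !mem_primes => h; apply: hloc.
  by case/orP: h => /andP[].
Qed.

End Abundance.

(* For parameters above the
   threshold the exponent a is large enough, below it a+1 is better. *)
Section Threshold.
Local Open Scope R_scope.

Definition threshold (p a : nat) : R :=
  ln (sigma_pow p a.+1 / sigma_pow p a) / ln (INR p) - 1.

Lemma ln_prime_pos p : prime p -> 0 < ln (INR p).
Proof. by move=> p_pr; rewrite -ln_1; apply: ln_increasing; [lra | apply: INR_prime_gt1]. Qed.

Lemma threshold_spec p a : prime p ->
  weight p (threshold p a) * sigma_pow p a = sigma_pow p a.+1.
Proof.
move=> p_pr; rewrite /weight /threshold /Rpower.
have := ln_prime_pos p_pr; have := sigma_pow_pos a p_pr; have := sigma_pow_pos a.+1 p_pr.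
move=> s1 s0 lp.
replace ((1 + (ln (sigma_pow p a.+1 / sigma_pow p a) / ln (INR p) - 1)) * ln (INR p))
  with (ln (sigma_pow p a.+1 / sigma_pow p a)) by (field; lra).
by rewrite exp_ln; [field; lra | apply: Rdiv_lt_0_compat].
Qed.

Lemma weight_le p x y : prime p -> x <= y -> weight p x <= weight p y.
Proof. by move=> p_pr h; apply: Rle_Rpower; [have := INR_prime_gt1 p_pr; lra | lra]. Qed.

Lemma weight_lt p x y : prime p -> x < y -> weight p x < weight p y.
Proof. by move=> p_pr h; apply: Rpower_lt; [apply: INR_prime_gt1 | lra]. Qed.

Lemma weightE p e : prime p -> weight p e = INR p * Rpower (INR p) e.
Proof.
move=> p_pr; rewrite /weight Rpower_plus Rpower_1 //.
exact: Rlt_trans Rlt_0_1 (INR_prime_gt1 p_pr).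
Qed.

Lemma threshold_le_weight p a x : prime p -> threshold p a <= x ->
  sigma_pow p a.+1 <= weight p x * sigma_pow p a.
Proof.
move=> p_pr h; rewrite -(threshold_spec a p_pr); apply: Rmult_le_compat_r.
  exact: Rlt_le (sigma_pow_pos a p_pr).
exact: weight_le.
Qed.

Lemma weight_le_threshold p a x : prime p ->
  sigma_pow p a.+1 <= weight p x * sigma_pow p a -> threshold p a <= x.
Proof.
move=> p_pr h; apply: Rnot_lt_le => hx.
have := weight_lt p_pr hx; have := threshold_spec a p_pr; have := sigma_pow_pos a p_pr.
nra.
Qed.

Lemma threshold_pos p a : prime p -> 0 < threshold p a.
Proof.
move=> p_pr; apply: Rnot_le_lt => h.
have := weight_le p_pr h; have := threshold_spec a p_pr; have := sigma_pow_pos a p_pr.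
have -> : weight p 0 = INR p.
  by rewrite weightE // Rpower_O ?Rmult_1_r //; have := INR_prime_gt1 p_pr; lra.
rewrite sigma_powS //; nra.
Qed.

Lemma weight_larger_prime p0 p e : prime p0 -> prime p -> (p0 < p)%N -> 0 < e ->
  1 + INR p0 <= weight p0 e -> 1 + INR p < weight p e.
Proof.
move=> p0_pr p_pr lt_p0p e_gt0 worth; rewrite !weightE // in worth *.
have p0_gt1 := INR_prime_gt1 p0_pr.
have lt_INR_p0p : INR p0 < INR p by apply: lt_INR; apply/ltP.
have lt_pow : Rpower (INR p0) e < Rpower (INR p) e.
  by apply: Rlt_Rpower_l => //; split=> //; lra.
have pow_gt1 : 1 < Rpower (INR p0) e by nra.
nra.
Qed.

End Threshold.

(* First-order conditions satisfied by a maximiser N of the abundance at e: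
   multiplying or dividing N by a prime q does not increase the abundance. *)
Section MaximiserConditions.
Local Open Scope R_scope.

Variables (N : nat) (e : R).
Hypothesis N_gt0 : (0 < N)%N.
Hypothesis N_max : forall k, (0 < k)%N -> abundance e k <= abundance e N.

Lemma maximiser_exponent_large q : prime q ->
  sigma_pow q (logn q N).+1 <= weight q e * sigma_pow q (logn q N).
Proof.
move=> q_pr; have q_gt0 := prime_gt0 q_pr.
case: (split_prime_part q_pr N_gt0) => N' [N'_gt0 co EN _].
have qa0 : (0 < q ^ logn q N)%N by rewrite expn_gt0 q_gt0.
have qa1 : (0 < q ^ (logn q N).+1)%N by rewrite expn_gt0 q_gt0.
have h := @N_max (N * q)%N ltac:(by rewrite muln_gt0 N_gt0 q_gt0).
have ENq : (N * q = N' * q ^ (logn q N).+1)%N by rewrite {1}EN expnSr mulnA.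
rewrite ENq {2}EN !abundance_mul // in h; try by apply: coprimeXr; rewrite coprime_sym.
have fall : abundance e (q ^ (logn q N).+1) <= abundance e (q ^ logn q N).
  by apply: (Rmult_le_reg_l (abundance e N')) => //; apply: abundance_pos.
apply: (Rmult_le_reg_l (abundance e (q ^ logn q N))); first exact: abundance_pos.
rewrite -(abundance_prime_powS e _ q_pr) Rmult_assoc.
apply: Rmult_le_compat_r => //; apply: Rlt_le.
exact/Rmult_lt_0_compat/sigma_pow_pos/q_pr/weight_pos.
Qed.

Lemma maximiser_exponent_small q : prime q -> (0 < logn q N)%N ->
  weight q e * sigma_pow q (logn q N).-1 <= sigma_pow q (logn q N).
Proof.
move=> q_pr; have q_gt0 := prime_gt0 q_pr.
case: (split_prime_part q_pr N_gt0) => N' [N'_gt0 co EN _].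
case Ea: (logn q N) => [|b] // _ /=.
have qb0 : (0 < q ^ b)%N by rewrite expn_gt0 q_gt0.
have qb1 : (0 < q ^ b.+1)%N by rewrite expn_gt0 q_gt0.
have h := @N_max (N' * q ^ b)%N ltac:(by rewrite muln_gt0 N'_gt0 qb0).
rewrite {1}EN Ea !abundance_mul // in h; try by apply: coprimeXr; rewrite coprime_sym.
have rise : abundance e (q ^ b) <= abundance e (q ^ b.+1).
  by apply: (Rmult_le_reg_l (abundance e N')) => //; apply: abundance_pos.
apply: (Rmult_le_reg_l (abundance e (q ^ b.+1))); first exact: abundance_pos.
rewrite -Rmult_assoc (abundance_prime_powS e b q_pr).
by apply: Rmult_le_compat_r => //; apply/Rlt_le/sigma_pow_pos.
Qed.

End MaximiserConditions.

(* Every positive N has a least prime not dividing it (some prime factor of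
   N + 1 does not divide N). *)
Lemma least_prime_nondivisor N : (0 < N)%N -> exists p0,
  [/\ prime p0, ~~ (p0 %| N) & forall p, prime p -> ~~ (p %| N) -> (p0 <= p)%N].
Proof.
move=> N_gt0; have ex : exists p, prime p && ~~ (p %| N).
  have p_pr : prime (pdiv N.+1) by apply: pdiv_prime; rewrite ltnS.
  exists (pdiv N.+1); rewrite p_pr /=; apply/negP => hd.
  have : pdiv N.+1 %| N + 1 by rewrite addn1 pdiv_dvd.
  rewrite (dvdn_addr _ hd) dvdn1 => /eqP h1.
  by move: (prime_gt1 p_pr); rewrite h1.
case: (ex_minnP ex) => p0 /andP[p0_pr p0_ndvd] p0_min.
by exists p0; split=> // p p_pr p_ndvd; apply: p0_min; rewrite p_pr.
Qed.

Lemma exists_argmax (g : nat -> R) x L :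
  exists2 q, q \in x :: L & forall q', q' \in x :: L -> (g q' <= g q)%R.
Proof.
elim: L x => [|y L IH] x.
  exists x => [|q']; first exact: mem_head.
  by rewrite mem_seq1 => /eqP ->; apply: Rle_refl.
case: (IH y) => q q_in q_max; case: (Rle_lt_dec (g x) (g q)) => hx.
- exists q => [|q']; first by rewrite inE q_in orbT.
  by rewrite inE => /orP[/eqP ->|/q_max].
- exists x => [|q']; first by rewrite inE eqxx.
  rewrite inE => /orP[/eqP ->|/q_max]; lra.
Qed.

Section ColossalStep.
Local Open Scope R_scope.

Variables (N : nat) (e : R).
Hypothesis N_gt0 : (0 < N)%N.
Hypothesis N_max : forall k, (0 < k)%N -> abundance e k <= abundance e N.

Variable p0 : nat.
Hypothesis p0_pr : prime p0.
Hypothesis p0_ndvd : ~~ (p0 %| N).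
Hypothesis p0_least : forall p, prime p -> ~~ (p %| N) -> (p0 <= p)%N.

Variable q : nat.
Hypothesis q_in : q \in p0 :: primes N.
Hypothesis q_max : forall r, r \in p0 :: primes N ->
  threshold r (logn r N) <= threshold q (logn q N).

Let e' := threshold q (logn q N).

Lemma step_prime : prime q.
Proof. by move: q_in; rewrite inE => /orP[/eqP ->|]; rewrite // mem_primes => /andP[]. Qed.

Lemma step_parameter_pos : 0 < e'.
Proof. exact: threshold_pos step_prime. Qed.

Lemma step_parameter_le : e' <= e.
Proof.
apply: weight_le_threshold; first exact: step_prime.
exact: maximiser_exponent_large N_gt0 N_max _ step_prime.
Qed.

Lemma p0_exponent : logn p0 N = 0%N.
Proof. by apply/eqP; rewrite -leqn0 leqNgt logn_gt0 mem_primes p0_pr N_gt0. Qed.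

Lemma p0_not_worth : 1 + INR p0 <= weight p0 e'.
Proof.
have := threshold_le_weight p0_pr (q_max (mem_head _ _)).
by rewrite -/e' p0_exponent sigma_powS // sigma_pow0; lra.
Qed.

Lemma step_local_max_q j :
  abundance e' (q ^ j) <= abundance e' (q ^ (logn q N).+1).
Proof.
have q_pr := step_prime; have tie := threshold_spec (logn q N) q_pr.
rewrite -/e' in tie; apply: abundance_prime_pow_max => //.
  apply: Rlt_le; apply: (Rmult_lt_reg_r (sigma_pow q (logn q N))).
    exact: sigma_pow_pos.
  rewrite (Rmult_comm (weight _ _)) Rmult_assoc tie.
  exact: sigma_pow_log_concave.
by right; rewrite /= tie; apply: Rle_refl.
Qed.

(* A prime p not in p0 :: primes N exceeds p0, so it is not worth including. *)
Lemma step_local_max_other p : prime p -> p != q ->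
  forall j, abundance e' (p ^ j) <= abundance e' (p ^ logn p N).
Proof.
move=> p_pr p_neq; apply: abundance_prime_pow_max => //.
  case: (boolP (p \in p0 :: primes N)) => p_in; first exact/threshold_le_weight/q_max.
  have p_ndvd : ~~ (p %| N).
    by apply: contra p_in => p_dvd; rewrite inE mem_primes p_pr N_gt0 p_dvd orbT.
  have lt_p0p : (p0 < p)%N.
    by rewrite ltn_neqAle p0_least // andbT; apply: contra p_in => /eqP <-; apply: mem_head.
  have -> : logn p N = 0%N.
    by apply/eqP; rewrite -leqn0 leqNgt logn_gt0 mem_primes p_pr N_gt0.
  rewrite sigma_powS // sigma_pow0 !Rmult_1_r.
  exact/Rlt_le/(weight_larger_prime p0_pr p_pr lt_p0p step_parameter_pos p0_not_worth).
case Ea: (logn p N) => [|b]; [by left | right].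
have := maximiser_exponent_small N_gt0 N_max p_pr; rewrite Ea => /(_ isT) small.
apply: Rle_trans small; apply: Rmult_le_compat_r; first exact/Rlt_le/sigma_pow_pos.
exact/weight_le/step_parameter_le.
Qed.

Lemma step_maximiser k : (0 < k)%N -> abundance e' k <= abundance e' (N * q).
Proof.
have q_pr := step_prime.
apply: abundance_max_of_local_max; first by rewrite muln_gt0 N_gt0 prime_gt0.
move=> p p_pr; rewrite (lognM _ N_gt0 (prime_gt0 q_pr)) (logn_prime p q_pr).
case: (eqVneq p q) => [->|p_neq] /=; first by rewrite addn1; apply: step_local_max_q.
by rewrite addn0; apply: step_local_max_other.
Qed.

(* q is at most p0: a larger prime would have threshold below that of p0. *)
Lemma step_prime_le : (q <= p0)%N.
Proof.
have q_pr := step_prime; rewrite leqNgt; apply/negP => lt_p0q.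
have larger := weight_larger_prime p0_pr q_pr lt_p0q step_parameter_pos p0_not_worth.
have tie := threshold_spec (logn q N) q_pr; rewrite -/e' sigma_powS // in tie.
have := sigma_pow_ge1 (logn q N) q_pr; nra.
Qed.

End ColossalStep.

Lemma colossal_successor N : colossally_abundant N -> exists p0 q,
  [/\ forall p, p < p0 -> prime p -> p %| N, prime q, q <= p0 &
      colossally_abundant (N * q)].
Proof.
move=> /colossally_abundantE [N_gt0 [e [_ N_max]]].
have [p0 [p0_pr p0_ndvd p0_least]] := least_prime_nondivisor N_gt0.
have [q q_in q_max] := exists_argmax (fun r => threshold r (logn r N)) p0 (primes N).
have q_pr := step_prime p0_pr q_in.
exists p0, q; split => //.
- move=> p lt_pp0 p_pr; apply/negPn/negP => p_ndvd.
  by have := p0_least p p_pr p_ndvd; rewrite leqNgt lt_pp0.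
- exact: (step_prime_le N_gt0 p0_pr p0_ndvd q_in q_max).
apply/colossally_abundantE; split; first by rewrite muln_gt0 N_gt0 prime_gt0.
exists (threshold q (logn q N)); split.
  exact: (step_parameter_pos p0_pr q_in).
exact: (step_maximiser N_gt0 N_max p0_pr p0_ndvd p0_least q_in q_max).
Qed.

(* Growth of the primorial: if every prime below p0 divides N then N is at
   least the product of the primes below p0, which is at least pi(p0)!;
   together with Erdos' elementary bound p0 <= 4^(pi(p0)+1) this shows that
   p0^K <= N for any fixed K once N is large. *)
Section PrimorialGrowth.

Definition primes_below (x : nat) : seq nat := [seq p <- iota 0 x | prime p].
Definition primorial (x : nat) : nat := \prod_(p <- primes_below x) p.
Definition prime_count (x : nat) : nat := count prime (iota 0 x).

Lemma primes_belowS x :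
  primes_below x.+1 = primes_below x ++ (if prime x then [:: x] else [::]).
Proof. by rewrite /primes_below -addn1 iotaD filter_cat /= add0n; case: (prime x). Qed.

Lemma prime_countS x : prime_count x.+1 = prime_count x + prime x.
Proof. by rewrite /prime_count -addn1 iotaD count_cat /= add0n addn0. Qed.

Lemma size_primes_below x : size (primes_below x) = prime_count x.
Proof. by rewrite /primes_below size_filter. Qed.

Lemma primes_below_uniq x : uniq (primes_below x).
Proof. by rewrite /primes_below filter_uniq // iota_uniq. Qed.

Lemma prime_count_le x : prime_count x.+1 <= x.
Proof. by elim: x => [|x IH] //; rewrite prime_countS; case: (prime x.+1); lia. Qed.

Lemma primorialS x : primorial x.+1 = primorial x * (if prime x then x else 1).
Proof.
rewrite /primorial primes_belowS big_cat /=.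
by case: (prime x); rewrite ?big_seq1 ?big_nil.
Qed.

Lemma primorial_dvd x N : (forall p, p < x -> prime p -> p %| N) -> primorial x %| N.
Proof.
elim: x => [|x IH] h; first by rewrite /primorial /primes_below /= big_nil dvd1n.
rewrite primorialS; case x_pr: (prime x).
  have co : coprime x (primorial x).
    rewrite /primorial big_seq; apply: (big_ind (coprime x)) => [||p].
    - exact: coprimen1.
    - by move=> a b ha hb; rewrite coprimeMr ha hb.
    rewrite /primes_below mem_filter mem_iota add0n => /andP[p_pr /andP[_ lt_px]].
    rewrite prime_coprime //; apply/negP => /(dvdn_leq (prime_gt0 p_pr)); lia.
  by rewrite mulnC Gauss_dvd // h //= IH // => p lt_px p_pr; apply: h => //; lia.
by rewrite muln1; apply: IH => p lt_px p_pr; apply: h => //; lia.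
Qed.

Lemma fact_prime_count_le_primorial x : (prime_count x)`! <= primorial x.
Proof.
elim: x => [|x IH]; first by rewrite /primorial /primes_below /= big_nil.
rewrite prime_countS primorialS; case x_pr: (prime x); last by rewrite addn0 muln1.
rewrite addn1 factS mulnC; apply: leq_mul => //.
by case: x x_pr IH => [|x] // _ _; have := prime_count_le x; lia.
Qed.

Lemma prod_prime_parts (P : seq nat) : uniq P -> all prime P ->
  forall m, 0 < m -> {subset primes m <= P} -> m = \prod_(p <- P) p ^ logn p m.
Proof.
elim: P => [|p P IH] /=.
  move=> _ _ m m_gt0 hm; rewrite big_nil; apply: primes_nil => //.
  by case: (primes m) hm => // x s /(_ x); rewrite inE eqxx => /(_ isT).
move=> /andP[pP uP] /andP[p_pr aP] m m_gt0 hm.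
case: (split_prime_part p_pr m_gt0) => m' [m'_gt0 co Em lm].
have hm' : {subset primes m' <= P}.
  move=> q /(primes_cofactor p_pr co m_gt0 Em) /andP[/= q_neq /hm].
  by rewrite inE (negbTE q_neq).
rewrite big_cons {1}Em mulnC (IH uP aP m' m'_gt0 hm'); congr muln.
apply: eq_big_seq => q qP.
have q_neq : q != p by apply: contraNneq pP => <-.
by rewrite -lm ?(allP aP).
Qed.

(* Erdos: writing m <= y as s^2 t with t squarefree, s <= sqrt y and t is
   determined by a subset of the primes up to y, so
   y <= (sqrt y + 1) 2^pi(y+1). *)
Lemma erdos_prime_count y : y <= (Nat.sqrt y).+1 * 2 ^ prime_count y.+1.
Proof.
set R := Nat.sqrt y; set P := primes_below y.+1.
have uP : uniq P := primes_below_uniq _.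
have aP : all prime P by apply/allP => p; rewrite mem_filter => /andP[].
pose s m := \prod_(p <- P) p ^ (logn p m)./2.
pose t m := \prod_(p <- P) p ^ odd (logn p m).
have square_decomp m : 0 < m -> m <= y -> m = s m * s m * t m.
  move=> m_gt0 le_my; rewrite {1}(@prod_prime_parts P uP aP m m_gt0).
    rewrite /s /t -!big_split /=; apply: eq_bigr => p _.
    by rewrite -!expnD -{1}(odd_double_half (logn p m)) -addnn addnC.
  move=> q; rewrite mem_primes mem_filter mem_iota => /and3P[q_pr _ qm].
  by rewrite q_pr /= add0n ltnS (leq_trans (dvdn_leq m_gt0 qm)).
have t_gt0 m : 0 < t m.
  rewrite /t big_seq; apply: (big_ind (fun x => 0 < x)) => // [a b|p pP].
    by rewrite muln_gt0 => -> ->.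
  by rewrite expn_gt0 prime_gt0 // (allP aP).
have s_small m : 0 < m -> m <= y -> s m < R.+1.
  move=> m_gt0 le_my; rewrite ltnS /R.
  have le_ssy : s m * s m <= y.
    by apply: leq_trans (le_my); rewrite [X in _ <= X](square_decomp m) // leq_pmulr.
  have := Nat.sqrt_le_mono (s m * s m) y; rewrite Nat.sqrt_square => h.
  by apply/leP; apply: h; apply/leP; rewrite -multE.
pose F (i : 'I_y) : 'I_R.+1 * (size P).-tuple bool :=
  (inord (s i.+1), map_tuple (fun p => odd (logn p i.+1)) (in_tuple P)).
have F_inj : injective F.
  move=> i j [/(congr1 (@nat_of_ord _))] Es Eb.
  rewrite !inordK ?s_small // in Es.
  have Et : t i.+1 = t j.+1.
    by apply: eq_big_seq => p pP; have /= -> := proj2 (eq_in_map _ _ _) Eb p pP.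
  apply: val_inj => /=; apply/eqP; rewrite -eqSS; apply/eqP.
  by rewrite (square_decomp i.+1) // (square_decomp j.+1) // Es Et.
have := leq_card F F_inj; rewrite card_ord card_prod card_ord card_tuple card_bool.
by rewrite /P size_primes_below.
Qed.

(* The Erdos bound in closed form, using sqrt y <= 2^pi(y+1). *)
Lemma le_pow4_prime_count x : x <= 4 ^ (prime_count x).+1.
Proof.
case: x => [|y] //; have h := erdos_prime_count y.
have := Nat.sqrt_spec y (Nat.le_0_l y).
set R := Nat.sqrt y in h *; set z := 2 ^ prime_count y.+1 in h *.
have -> : 4 ^ (prime_count y.+1).+1 = 4 * (z * z).
  by rewrite expnS /z -expnD addnn -mul2n expnM.
move=> [h1 h2]; have le_Rz : R <= z by nia.
nia.
Qed.

Lemma factorial_dominates c : exists k0, forall k, k0 <= k -> c ^ k.+1 <= k`!.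
Proof.
case: (posnP c) => [->|c_gt0]; first by exists 0 => k _; rewrite exp0n.
set d := 2 * c; set C := d ^ d.
have d_gt0 : 0 < d by rewrite /d muln_gt0 c_gt0.
have claim k : d ^ k <= C * k`!.
  elim: k => [|k IH]; first by rewrite expn0 fact0 muln1 /C expn_gt0 d_gt0.
  case: (leqP k.+1 d) => hk.
    apply: (@leq_trans (d ^ d)); first exact: leq_pexp2l.
    by apply: leq_pmulr; apply: fact_gt0.
  by rewrite expnS factS mulnCA; apply: leq_mul => //; apply: ltnW.
exists (c * C) => k hk.
have h1 : c ^ k.+1 * 2 ^ k <= c * C * k`!.
  by rewrite expnS -mulnA -expnMn (mulnC c 2) -/d -mulnA leq_mul2l (claim k) orbT.
have h2 : c * C * k`! <= 2 ^ k * k`!.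
  by apply: leq_mul => //; apply: (leq_trans hk); apply: ltnW; apply: ltn_expl.
by have := leq_trans h1 h2; rewrite mulnC leq_pmul2l // expn_gt0.
Qed.

Lemma pow_least_nondivisor_le K : exists B, forall N p0, B <= N ->
  (forall p, p < p0 -> prime p -> p %| N) -> p0 ^ K <= N.
Proof.
have pow_mono m n : m <= n -> m ^ K <= n ^ K.
  by case: (posnP K) => [->|K_gt0] //; rewrite leq_exp2r.
case: (factorial_dominates (4 ^ K)) => k0 hk0; set X := 4 ^ k0.
exists (X ^ K).+1 => N p0 hN hdiv.
have N_gt0 : 0 < N by apply: leq_trans hN.
case: (leqP p0 X) => hp.
  exact: leq_trans (pow_mono _ _ hp) (ltnW hN).
have hk : k0 <= prime_count p0.
  rewrite leqNgt; apply/negP => lt_pc.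
  have : 4 ^ (prime_count p0).+1 <= X by rewrite /X leq_exp2l.
  by move/(leq_trans (le_pow4_prime_count p0)); rewrite leqNgt hp.
apply: (@leq_trans ((4 ^ K) ^ (prime_count p0).+1)).
  by rewrite -expnM mulnC expnM pow_mono // le_pow4_prime_count.
apply: (leq_trans (hk0 _ hk)); apply: (leq_trans (fact_prime_count_le_primorial p0)).
exact/dvdn_leq/primorial_dvd.
Qed.

End PrimorialGrowth.
(* The increasing enumeration n of the colossally abundant numbers:
   n(i+1) <= n(i) p0 where p0^K <= n(i) eventually, hence
   n(i+1)^K <= n(i)^(K+1) eventually. *)
Section ColossalSequence.

Variable n : nat -> nat.
Hypothesis n_incr : forall i, (n i < n (S i))%coq_nat.
Hypothesis n_range : forall m, colossally_abundant m <-> exists i, n i = m.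

Lemma ca_seq_le : {homo n : i j / i <= j}.
Proof.
apply: homo_leq => [x|y x z|i]; [exact: leqnn | exact: leq_trans | exact/ltnW/ltP].
Qed.

Lemma ca_seq_gt0 i : 0 < n i.
Proof.
have := proj2 (n_range (n i)) (ex_intro _ i erefl).
by case/colossally_abundantE.
Qed.

Lemma ca_seq_ge i : i < n i.
Proof.
elim: i => [|i IH]; first exact: ca_seq_gt0.
exact: leq_ltn_trans IH (introT ltP (n_incr i)).
Qed.

(* Colossally abundant n i * q, with q <= p0, appears later in the sequence. *)
Lemma ca_seq_next i : exists p0,
  n i.+1 <= n i * p0 /\ forall p, p < p0 -> prime p -> p %| n i.
Proof.
have [p0 [q [below q_pr le_qp0 ca_Nq]]] :=
  colossal_successor (proj2 (n_range (n i)) (ex_intro _ i erefl)).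
exists p0; split=> //.
have [j Ej] := proj1 (n_range _) ca_Nq.
have lt_ij : i < j.
  rewrite ltnNge; apply/negP => le_ji.
  have := ca_seq_le le_ji.
  by rewrite Ej leqNgt ltn_Pmulr ?prime_gt1 ?ca_seq_gt0.
apply: leq_trans (ca_seq_le lt_ij) _.
by rewrite Ej leq_mul2l le_qp0 orbT.
Qed.

(* With p0^K <= n i for large i: n(i+1)^K <= (n i p0)^K <= n(i)^(K+1). *)
Lemma ca_seq_consecutive K :
  exists I, forall i, I <= i -> n i.+1 ^ K <= n i ^ K.+1.
Proof.
have [B hB] := pow_least_nondivisor_le K.
exists B => i le_Bi; have [p0 [next below]] := ca_seq_next i.
have p0_small : p0 ^ K <= n i.
  by apply: hB below; apply: leq_trans le_Bi (ltnW (ca_seq_ge i)).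
apply: (@leq_trans ((n i * p0) ^ K)).
  by case: (posnP K) => [->|K_gt0] //; rewrite leq_exp2r.
by rewrite expnMn expnSr leq_mul2l p0_small orbT.
Qed.

End ColossalSequence.

Lemma expn_natpow m k : m ^ k = Nat.pow m k.
Proof. by elim: k => [|k IH] //; rewrite expnS IH. Qed.

Lemma ca_seq_growth (n : nat -> nat) :
  (forall i, (n i < n (S i))%coq_nat) ->
  (forall m, colossally_abundant m <-> exists i, n i = m) ->
  (forall i, (i < n i)%coq_nat) /\
  forall K, exists I, forall i, (I <= i)%coq_nat ->
    (Nat.pow (n (S i)) K <= Nat.pow (n i) (S K))%coq_nat.
Proof.
move=> n_incr n_range; split=> [i|K]; first exact/ltP/ca_seq_ge.
have [I hI] := ca_seq_consecutive n_incr n_range K.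
by exists I => i /leP le_Ii; apply/leP; rewrite -!expn_natpow hI.
Qed.

End CAGrowth.

Open Scope R_scope.

Lemma ln_ratio_bounds (x y : R) (K : nat) :
  1 < x -> x <= y -> y ^ K <= x ^ S K -> 1 - / INR (S K) <= ln x / ln y <= 1.
Proof.
move=> x_gt1 le_xy pow_le.
have ln_le u v : 0 < u -> u <= v -> ln u <= ln v.
  by move=> u_pos [lt_uv|->]; [apply/Rlt_le/ln_increasing | apply: Rle_refl].
have lnx_pos : 0 < ln x by rewrite -ln_1; apply: ln_increasing; lra.
have le_lnxy : ln x <= ln y by apply: ln_le; lra.
have Kb_le : INR K * ln y <= INR (S K) * ln x.
  by rewrite -!ln_pow; try lra; apply: ln_le => //; apply: pow_lt; lra.
have K_ge0 := pos_INR K; rewrite S_INR in Kb_le *.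
split.
- apply: (Rmult_le_reg_r (ln y)); first lra.
  rewrite /Rdiv Rmult_assoc Rinv_l; last lra.
  have -> : (1 - / (INR K + 1)) * ln y = (INR K * ln y) / (INR K + 1) by field; lra.
  apply: (Rmult_le_reg_r (INR K + 1)); first lra.
  rewrite /Rdiv Rmult_assoc Rinv_l; nra.
- apply: (Rmult_le_reg_r (ln y)); first lra.
  by rewrite /Rdiv Rmult_assoc Rinv_l; lra.
Qed.

(* Main theorem: log n_i / log n_(i+1) -> 1.  Given eps, choose K with
   1/K < eps; eventually n(i+1)^K <= n(i)^(K+1), so the ratio is within
   1/(K+1) of 1. *)
Theorem mainTheorem4 (n : nat -> nat)
  (Hincr : forall i : nat, (n i < n (S i))%nat)
  (Hrange : forall m : nat, colossally_abundant m <-> exists i : nat, n i = m) :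
  Un_cv (fun i : nat => ln (INR (n i)) / ln (INR (n (S i)))) 1.
Proof.
have [n_large n_growth] := CAGrowth.ca_seq_growth Hincr Hrange.
move=> eps eps_pos.
have [K [K_small K_pos]] := archimed_cor1 eps eps_pos.
have [I HI] := n_growth K.
exists (S I) => i le_Ii; rewrite /R_dist.
have x_gt1 : 1 < INR (n i) by apply: lt_1_INR; have := n_large i; lia.
have le_xy : INR (n i) <= INR (n (S i)) by apply/le_INR/Nat.lt_le_incl.
have pow_le : INR (n (S i)) ^ K <= INR (n i) ^ S K.
  by rewrite -!pow_INR; apply/le_INR/HI; lia.
have [lo hi] := ln_ratio_bounds x_gt1 le_xy pow_le.
have K_gt0 : 0 < INR K by apply: lt_0_INR.
have inv_lt : / INR (S K) < / INR K by apply: Rinv_lt_contravar; rewrite S_INR; nra.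
rewrite Rabs_left1; lra.
Qed.
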